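(* Let $(K,d_K)$ be an acyclic graded-commutative dg-algebra and let $(A,d_A)$ be a dg-algebra over $(K,d_K)$. Then the map $\alpha:\ker(d_A)\otimes_{\ker(d_K)}K\to A$, $a\otimes x\mapsto ax$, is an isomorphism of dg-algebras, where $\ker(d_A)\otimes_{\ker(d_K)}K$ carries the differential $a\otimes x\mapsto(-1)^{|a|}a\otimes d_K(x)$.
   Context: Dg-algebra: $\mathbb Z$-graded algebra with degree-$1$ map $d$, $d^2=0$, $d(ab)=d(a)b+(-1)^{|a|}a\,d(b)$. Acyclic means the cohomology $H(K,d_K)=\ker(d_K)/\mathrm{im}(d_K)$ vanishes. Graded-commutative: $xy=(-1)^{|x||y|}yx$ for homogeneous $x,y$. Graded centre $Z_{gr}(A)$: spanned by homogeneous $z$ with $za=(-1)^{|z||a|}az$. A dg-algebra over $(K,d_K)$ is a dg-algebra $(A,d_A)$ with a degree-$0$ graded ring homomorphism $K\to Z_{gr}(A)$ commuting with differentials. The tensor product algebra uses $(a\otimes x)(b\otimes y)=(-1)^{|x||b|}ab\otimes xy$. *)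

From HB Require Import structures.
From mathcomp Require Import all_boot all_order all_algebra.
From mathcomp Require Import freeg.
Set Implicit Arguments.
Unset Strict Implicit.
Unset Printing Implicit Defensive.
Import Order.TTheory GRing.Theory Num.Theory.
Local Open Scope ring_scope.

(* Z-graded rings.  A Z-graded algebra (over Z) A = (+)_n A_n is       *)
(* represented by its underlying ring [A] together with the family of  *)
(* homogeneous components [H n : A -> Prop] (H n a <-> a \in A_n).     *)

Definition sgn (R : pzRingType) (n : int) : R := (-1) ^+ `|n|%N.

Definition is_graded (A : pzRingType) (H : int -> A -> Prop) : Prop :=
  [/\
      (forall n, H n 0),
      (forall n a b, H n a -> H n b -> H n (a - b)),
      (forall m n a b, H m a -> H n b -> H (m + n) (a * b)) /\ H 0 1,
      (forall a : A, exists s : seq (int * A),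
          {in s, forall p, H p.1 p.2} /\ a = \sum_(p <- s) p.2)
    &
      (forall s : seq (int * A), uniq (map fst s) ->
          {in s, forall p, H p.1 p.2} -> \sum_(p <- s) p.2 = 0 ->
          {in s, forall p, p.2 = 0})].

Definition is_dga (A : pzRingType) (H : int -> A -> Prop) (d : A -> A) : Prop :=
  [/\ is_graded H,
      (forall a b, d (a + b) = d a + d b),
      (forall n a, H n a -> H (n + 1) (d a)),
      (forall a, d (d a) = 0)
    & (forall n a b, H n a -> d (a * b) = d a * b + sgn A n * a * d b)].

Definition graded_commutative (K : pzRingType) (H : int -> K -> Prop) : Prop :=
  forall m n x y, H m x -> H n y -> x * y = sgn K (m * n) * (y * x).

Definition acyclic (K : pzRingType) (d : K -> K) : Prop :=
  forall x, d x = 0 -> exists y, x = d y.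

Definition gr_central_hom (A : pzRingType) (H : int -> A -> Prop) (m : int) (z : A) :=
  H m z /\ forall n a, H n a -> z * a = sgn A (m * n) * (a * z).

Definition in_graded_centre (A : pzRingType) (H : int -> A -> Prop) (z : A) : Prop :=
  exists s : seq (int * A),
    {in s, forall p, gr_central_hom H p.1 p.2} /\ z = \sum_(p <- s) p.2.

(* (A, d_A) is a dg-algebra over (K, d_K) via phi : K -> Z_gr(A), a   *)
(* degree-0 graded ring homomorphism commuting with the differentials  *)
Definition dga_over (K A : pzRingType) (HK : int -> K -> Prop) (dK : K -> K)
    (HA : int -> A -> Prop) (dA : A -> A) (phi : K -> A) : Prop :=
  [/\ (forall x y, phi (x + y) = phi x + phi y),
      (forall x y, phi (x * y) = phi x * phi y),
      phi 1 = 1,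
      (forall n x, HK n x -> HA n (phi x)) /\
      (forall x, in_graded_centre HA (phi x))
    & (forall x, dA (phi x) = phi (dK x))].

(* The tensor product ker(d_A) (x)_{ker(d_K)} K, presented as the free *)
(* abelian group on generators [p, a, q, x] = a (x) x  (a \in ker d_A  *)
(* homogeneous of degree p, x \in K homogeneous of degree q) modulo    *)
(* the subgroup of bilinearity and balancing relations.                *)

Definition gen (A K : pzRingType) : Type := (int * A * int * K)%type.
Definition Gen (A K : pzRingType) p (a : A) q (x : K) : gen A K := (p, a, q, x).
Definition gdegA {A K : pzRingType} (g : gen A K) : int := g.1.1.1.
Definition gelA {A K : pzRingType} (g : gen A K) : A := g.1.1.2.
Definition gdegK {A K : pzRingType} (g : gen A K) : int := g.1.2.
Definition gelK {A K : pzRingType} (g : gen A K) : K := g.2.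

Definition FT (A K : pzRingType) := {freeg (gen A K) / int}.

Definition fgen {A K : pzRingType} (g : gen A K) : FT A K := << g >>.

Section Tensor.
Variables (K A : pzRingType) (HK : int -> K -> Prop) (dK : K -> K)
          (HA : int -> A -> Prop) (dA : A -> A) (phi : K -> A).

Definition wf_gen (g : gen A K) : Prop :=
  [/\ HA (gdegA g) (gelA g), dA (gelA g) = 0 & HK (gdegK g) (gelK g)].

Definition wf_FT (s : FT A K) : Prop := {in dom s, forall g, wf_gen g}.

Inductive tensor_rel_gen : FT A K -> Prop :=
  | rel_addl p a a' q x :
      HA p a -> dA a = 0 -> HA p a' -> dA a' = 0 -> HK q x ->
      tensor_rel_gen (fgen (Gen p (a + a') q x) - fgen (Gen p a q x) - fgen (Gen p a' q x))
  | rel_addr p a q x x' :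
      HA p a -> dA a = 0 -> HK q x -> HK q x' ->
      tensor_rel_gen (fgen (Gen p a q (x + x')) - fgen (Gen p a q x) - fgen (Gen p a q x'))
  | rel_bal p a r z q x :
      HA p a -> dA a = 0 -> HK r z -> dK z = 0 -> HK q x ->
      tensor_rel_gen (fgen (Gen (p + r) (a * phi z) q x) - fgen (Gen p a (r + q) (z * x))).

Inductive tensor_rel : FT A K -> Prop :=
  | trel_gen s : tensor_rel_gen s -> tensor_rel s
  | trel_zero : tensor_rel 0
  | trel_sub s t : tensor_rel s -> tensor_rel t -> tensor_rel (s - t).

Definition gen_mul (g h : gen A K) : FT A K :=
  << sgn int (gdegK g * gdegA h) *g
     Gen (gdegA g + gdegA h) (gelA g * gelA h) (gdegK g + gdegK h) (gelK g * gelK h) >>.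

Definition tmul (s t : FT A K) : FT A K :=
  \sum_(g <- dom s) \sum_(h <- dom t) (coeff g s * coeff h t) *: gen_mul g h.

Definition tone : FT A K := fgen (Gen 0 1 0 1).

Definition gen_diff (g : gen A K) : FT A K :=
  << sgn int (gdegA g) *g Gen (gdegA g) (gelA g) (gdegK g + 1) (dK (gelK g)) >>.

Definition tdiff (s : FT A K) : FT A K :=
  \sum_(g <- dom s) coeff g s *: gen_diff g.

Definition alpha_gen (g : gen A K) : A := gelA g * phi (gelK g).

Definition alpha (s : FT A K) : A :=
  \sum_(g <- dom s) alpha_gen g *~ coeff g s.

Definition alpha_dga_iso : Prop :=
  [/\ (* alpha is well defined on the quotient and injective *)
      (forall s t, wf_FT s -> wf_FT t -> (alpha s = alpha t <-> tensor_rel (s - t))),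
      (forall a : A, exists2 s, wf_FT s & alpha s = a),
      (forall g, wf_gen g -> HA (gdegA g + gdegK g) (alpha (fgen g))),
      alpha tone = 1 /\
      (forall s t, wf_FT s -> wf_FT t -> alpha (tmul s t) = alpha s * alpha t)
    &
      (forall s, wf_FT s -> alpha (tdiff s) = dA (alpha s))].

End Tensor.

From HB Require Import structures.
From mathcomp Require Import all_boot all_order all_algebra.
From mathcomp Require Import freeg.
Set Implicit Arguments.
Unset Strict Implicit.
Unset Printing Implicit Defensive.
Import Order.TTheory GRing.Theory Num.Theory.
Local Open Scope ring_scope.

(* Since K is acyclic and d 1 = 0, there is e in K^-1 with d e = 1, and multiplication
   by e, or by E = phi e in A, is a contracting homotopy: c = d(E c) + E d c.  Both
   d(E c) and d c are cycles, so a homogeneous c in A^n has the explicit preimage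
   beta_n c = d(E c) (x) 1 + (-1)^(n+1) d c (x) e, whence surjectivity.  Conversely,
   writing x = d(e x) + e d x and moving the cycles d(e x) and d x across the tensor
   sign shows that every pure tensor a (x) x is congruent to beta(a phi(x)) modulo the
   defining relations.  As beta is additive modulo the relations on each homogeneous
   component, an element killed by alpha is congruent, degree by degree, to beta 0,
   i.e. to 0.  Multiplicativity and compatibility with the differentials are
   computations on generators using that phi(K) is graded-central. *)

Lemma big_undup_partition (R : nmodType) (I J : eqType)
    (r : seq I) (f : I -> J) (F : I -> R) :
  \sum_(i <- r) F i = \sum_(j <- undup (map f r)) \sum_(i <- r | f i == j) F i.
Proof.
rewrite [RHS](exchange_big_dep predT) //=; apply: eq_big_seq => i ri.
rewrite (eq_bigl (pred1 (f i))) => [|j]; last by rewrite /= eq_sym.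
by rewrite -big_filter filter_pred1_uniq ?undup_uniq ?big_seq1 ?mem_undup ?map_f.
Qed.

Definition is_subgroup (M : zmodType) (P : M -> Prop) :=
  P 0 /\ forall x y, P x -> P y -> P (x - y).

Definition eqmod (M : zmodType) (P : M -> Prop) x y := P (x - y).

Section Subgroup.
Variables (M : zmodType) (P : M -> Prop).
Hypothesis subP : is_subgroup P.

Lemma subgroup0 : P 0. Proof. by case: subP. Qed.

Lemma subgroupB x y : P x -> P y -> P (x - y). Proof. by case: subP => _; apply. Qed.

Lemma subgroupN x : P x -> P (- x).
Proof. by move=> Px; rewrite -sub0r; apply: subgroupB => //; apply: subgroup0. Qed.

Lemma subgroupD x y : P x -> P y -> P (x + y).
Proof. by move=> Px Py; rewrite -[y]opprK; apply/subgroupB/subgroupN. Qed.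

Lemma subgroup_sum (I : Type) (r : seq I) (Q : pred I) (F : I -> M) :
  (forall i, Q i -> P (F i)) -> P (\sum_(i <- r | Q i) F i).
Proof.
by move=> PF; elim/big_rec: _ => [|i x /PF]; [apply: subgroup0 | apply: subgroupD].
Qed.

Lemma subgroupMz x k : P x -> P (x *~ k).
Proof.
move=> Px; elim/int_rec: k => [|k IH|k IH]; first by rewrite mulr0z; apply: subgroup0.
  by rewrite intS mulrzDr mulr1z; apply: subgroupD.
by rewrite intS opprD mulrzDr mulrNz mulr1z; apply/subgroupD/IH/subgroupN.
Qed.

Lemma subgroup_eqmod x y : eqmod P x y -> P y -> P x.
Proof. by move=> Pxy Py; rewrite -(subrK y x); apply: subgroupD. Qed.

Lemma eqmod_refl x : eqmod P x x.
Proof. by rewrite /eqmod subrr; apply: subgroup0. Qed.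

Lemma eqmod_sym x y : eqmod P x y -> eqmod P y x.
Proof. by move=> Pxy; rewrite /eqmod -opprB; apply: subgroupN. Qed.

Lemma eqmod_trans x y z : eqmod P x y -> eqmod P y z -> eqmod P x z.
Proof. by move=> Pxy Pyz; rewrite /eqmod -[x](subrK y) -addrA; apply: subgroupD. Qed.

Lemma eqmodD x x' y y' :
  eqmod P x x' -> eqmod P y y' -> eqmod P (x + y) (x' + y').
Proof. by rewrite /eqmod opprD addrACA; apply: subgroupD. Qed.

Lemma eqmodN x y : eqmod P x y -> eqmod P (- x) (- y).
Proof. by rewrite /eqmod -opprD; apply: subgroupN. Qed.

Lemma eqmodMz x y k : eqmod P x y -> eqmod P (x *~ k) (y *~ k).
Proof. by rewrite /eqmod -mulrzBl; apply: subgroupMz. Qed.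

Lemma eqmod_sum (I : Type) (r : seq I) (Q : pred I) (F G : I -> M) :
  (forall i, Q i -> eqmod P (F i) (G i)) ->
  eqmod P (\sum_(i <- r | Q i) F i) (\sum_(i <- r | Q i) G i).
Proof. by move=> FG; rewrite /eqmod -sumrB; apply: subgroup_sum. Qed.

End Subgroup.

Definition additive_mod (M N : zmodType) (P : M -> Prop) (Q : N -> Prop)
    (f : M -> N) :=
  forall a b, P a -> P b -> eqmod Q (f (a + b)) (f a + f b).

Section AdditiveModulo.
Variables (M N : zmodType) (P : M -> Prop) (Q : N -> Prop) (f : M -> N).
Hypotheses (subP : is_subgroup P) (subQ : is_subgroup Q).
Hypothesis fD : additive_mod P Q f.

Lemma additive_mod0 : Q (f 0).
Proof.
have := fD (subgroup0 subP) (subgroup0 subP).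
by rewrite addr0 /eqmod opprD addrA subrr sub0r => /(subgroupN subQ); rewrite opprK.
Qed.

Lemma additive_modN a : P a -> eqmod Q (f (- a)) (- f a).
Proof.
move=> Pa; have := fD (subgroupN subP Pa) Pa; rewrite addNr /eqmod opprK => Q0.
by rewrite -[_ + _](subKr (f 0)); apply: (subgroupB subQ _ Q0); apply: additive_mod0.
Qed.

Lemma additive_modMn a n : P a -> eqmod Q (f (a *+ n)) (f a *+ n).
Proof.
move=> Pa; elim: n => [|n IH].
  by rewrite !mulr0n /eqmod subr0; apply: additive_mod0.
rewrite !mulrS; apply: (eqmod_trans subQ (fD Pa _) (eqmodD subQ (eqmod_refl subQ _) IH)).
by rewrite pmulrn; apply: subgroupMz.
Qed.

Lemma additive_modMz a k : P a -> eqmod Q (f (a *~ k)) (f a *~ k).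
Proof.
move=> Pa; case: k => n; first exact: additive_modMn.
rewrite NegzE !mulrNz; apply: (eqmod_trans subQ (additive_modN _)).
  exact: subgroupMz.
exact/(eqmodN subQ)/additive_modMn.
Qed.

Lemma additive_mod_sum (I : Type) (r : seq I) (R : pred I) (F : I -> M) :
  (forall i, R i -> P (F i)) ->
  eqmod Q (f (\sum_(i <- r | R i) F i)) (\sum_(i <- r | R i) f (F i)).
Proof.
move=> PF; elim: r => [|i r IH].
  by rewrite !big_nil /eqmod subr0; apply: additive_mod0.
rewrite !big_cons; case: ifP => // Ri.
have Psum : P (\sum_(j <- r | R j) F j) by apply: subgroup_sum.
apply: (eqmod_trans subQ (fD (PF i Ri) Psum)).
exact: (eqmodD subQ (eqmod_refl subQ _) IH).
Qed.

End AdditiveModulo.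

Lemma addf_zmod_morphism (M N : zmodType) (f : M -> N) :
  {morph f : x y / x + y} -> zmod_morphism f.
Proof. by move=> fD x y; apply: (addIr (f y)); rewrite -fD !subrK. Qed.

Section FreegLift.
Variables (T : choiceType) (M : zmodType).
Implicit Types (F : T -> M) (s : {freeg T / int}).

Definition fgliftz F s : M := \sum_(g <- dom s) F g *~ coeff g s.

Lemma fgliftz_uniq_subset F s r : uniq r -> {subset dom s <= r} ->
  fgliftz F s = \sum_(g <- r) F g *~ coeff g s.
Proof.
move=> ur sr; rewrite (bigID (mem (dom s))) /= [X in _ + X]big1 ?addr0; last first.
  by move=> g /negPf gs; rewrite coeff_outdom ?gs ?mulr0z.
rewrite -big_filter; apply/perm_big/uniq_perm; rewrite ?filter_uniq ?uniq_dom //.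
by move=> g; rewrite mem_filter andb_idr //; apply: sr.
Qed.

Lemma fgliftz_is_zmod_morphism F : zmod_morphism (fgliftz F).
Proof.
move=> s t; set r := undup (dom s ++ dom t).
have ur : uniq r by apply: undup_uniq.
have sr (u : {freeg T / int}) : {subset dom u <= dom s ++ dom t} -> {subset dom u <= r}.
  by move=> sub g /sub; rewrite mem_undup.
rewrite (fgliftz_uniq_subset F ur (sr _ (@domB _ _ s t))).
rewrite (fgliftz_uniq_subset F ur (sr s _)) => [|g gs]; last by rewrite mem_cat gs.
rewrite (fgliftz_uniq_subset F ur (sr t _)) => [|g gt]; last by rewrite mem_cat gt orbT.
by rewrite -sumrB; apply: eq_bigr => g _; rewrite coeffB mulrzBr.
Qed.

HB.instance Definition _ F :=
  GRing.isZmodMorphism.Build _ _ (fgliftz F) (fgliftz_is_zmod_morphism F).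

Lemma fgliftzU F k g : fgliftz F << k *g g >> = F g *~ k.
Proof.
have [->|k0] := eqVneq k 0; first by rewrite freegU0 raddf0 mulr0z.
by rewrite /fgliftz domU // big_seq1 coeffU eqxx mulr1.
Qed.

Lemma fgliftzZ F k s : fgliftz F (k *: s) = fgliftz F s *~ k.
Proof. by rewrite -[k in LHS]intz scaler_int raddfMz. Qed.

End FreegLift.

Section Sign.
Variable R : pzRingType.

Lemma sgnN n : sgn R (- n) = sgn R n.
Proof. by rewrite /sgn abszN. Qed.

Lemma sgnN1 : sgn R (-1) = -1.
Proof. by rewrite sgnN /sgn expr1. Qed.

Lemma sgnS n : sgn R (n + 1) = - sgn R n.
Proof.
have sgnSn (k : nat) : sgn R (k%:Z + 1) = - sgn R k.
  by rewrite /sgn -PoszD addn1 exprS mulN1r.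
case: n => k; first exact: sgnSn.
rewrite NegzE -[in RHS]sgnN opprK -(sgnN (_ + 1)) opprD opprK addrC intS addKr.
by rewrite addrC sgnSn opprK.
Qed.

Lemma sgnB1 n : sgn R (n - 1) = - sgn R n.
Proof. by rewrite -[in RHS](subrK 1 n) sgnS opprK. Qed.

Lemma sgnD m n : sgn R (m + n) = sgn R m * sgn R n.
Proof.
elim/int_rec: n => [|k IH|k IH]; first by rewrite addr0 mulr1.
  by rewrite intS addrCA !(addrC 1) !sgnS IH mulrN.
by rewrite intS opprD addrCA !(addrC (-1)) !sgnB1 IH mulrN.
Qed.

Lemma sgnK n : sgn R n * sgn R n = 1.
Proof. by rewrite /sgn -expr2 sqrr_sign. Qed.

Lemma sgnC n (x : R) : sgn R n * x = x * sgn R n.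
Proof. exact: esym (commr_sign x _). Qed.

Lemma mulrz_sgn (x : R) n : x *~ sgn int n = sgn R n * x.
Proof. by rewrite -mulrzl /sgn rmorph_sign. Qed.

End Sign.

Section GradedRing.
Variables (A : pzRingType) (H : int -> A -> Prop).
Hypothesis gradedH : is_graded H.

Lemma graded_subgroup n : is_subgroup (H n).
Proof. by case: gradedH => H0 HB _ _ _; split; [apply: H0 | apply: HB]. Qed.

Lemma gradedM m n a b : H m a -> H n b -> H (m + n) (a * b).
Proof. by case: gradedH => _ _ [HM _] _ _; apply: HM. Qed.

Lemma graded1 : H 0 1.
Proof. by case: gradedH => _ _ [_ H1] _ _. Qed.

Lemma graded_decomposition a :
  exists s : seq (int * A), {in s, forall p, H p.1 p.2} /\ a = \sum_(p <- s) p.2.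
Proof. by case: gradedH => _ _ _ + _; apply. Qed.

Definition component n (s : seq (int * A)) := \sum_(p <- s | p.1 == n) p.2.

Lemma component_hom n s : {in s, forall p, H p.1 p.2} -> H n (component n s).
Proof.
move=> Hs; rewrite /component big_seq_cond.
by apply: (subgroup_sum (graded_subgroup n)) => p /andP [/Hs + /eqP <-].
Qed.

Lemma component_eq0 n s : {in s, forall p, H p.1 p.2} ->
  \sum_(p <- s) p.2 = 0 -> component n s = 0.
Proof.
move=> Hs s0; set D := undup (map fst s).
set v := [seq (m, component m s) | m <- D].
have vD : map fst v = D by rewrite -map_comp map_id.
have Hv : {in v, forall p, H p.1 p.2} by move=> _ /mapP [m _ ->]; apply: component_hom.
have v0 : \sum_(p <- v) p.2 = 0.
  by rewrite big_map; move: s0; rewrite (big_undup_partition _ fst).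
case: gradedH => _ _ _ _ /(_ v); rewrite vD => /(_ (undup_uniq _) Hv v0) vi0.
have [nD|nD] := boolP (n \in D).
  have vn : (n, component n s) \in v by apply/mapP; exists n.
  exact: vi0 vn.
rewrite /component big1_seq // => p /andP [/eqP pn ps].
by move: nD; rewrite mem_undup -pn map_f.
Qed.

Lemma component_homE n a s : H n a -> {in s, forall p, H p.1 p.2} ->
  \sum_(p <- s) p.2 = a -> component n s = a.
Proof.
move=> Ha Hs sa; apply/eqP; rewrite -subr_eq0; apply/eqP.
have Hs' : {in (n, - a) :: s, forall p, H p.1 p.2}.
  move=> p; rewrite inE => /predU1P [-> | /Hs //].
  exact: (subgroupN (graded_subgroup n)).
have := component_eq0 n Hs'; rewrite big_cons sa addNr => /(_ erefl).
by rewrite /component big_cons eqxx addrC.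
Qed.

Lemma graded_centre_hom m z : H m z -> in_graded_centre H z -> gr_central_hom H m z.
Proof.
move=> Hz [s [cs zs]]; split=> // n a Ha.
have Hs : {in s, forall p, H p.1 p.2} by move=> p /cs [].
rewrite -(component_homE Hz Hs (esym zs)) /component.
rewrite mulr_suml !mulr_sumr big_seq_cond [RHS]big_seq_cond.
by apply: eq_bigr => p /andP [/cs [_ pC] /eqP <-]; rewrite (pC n).
Qed.

Lemma graded_sum_eq0_mod (N : zmodType) (Q : N -> Prop) (f : int -> A -> N)
    (s : seq (int * A)) :
  is_subgroup Q -> (forall n, additive_mod (H n) Q (f n)) ->
  {in s, forall p, H p.1 p.2} -> \sum_(p <- s) p.2 = 0 ->
  Q (\sum_(p <- s) f p.1 p.2).
Proof.
move=> subQ fD Hs s0; rewrite (big_undup_partition _ fst).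
apply: (subgroup_sum subQ) => n _.
apply: (subgroup_eqmod subQ _ (additive_mod0 (graded_subgroup n) subQ (fD n))).
rewrite -(component_eq0 n Hs s0) big_seq_cond.
rewrite (eq_bigr (fun p => f n p.2)) => [|p /andP [_ /eqP ->] //].
apply: (eqmod_sym subQ); rewrite /component big_seq_cond.
apply: (additive_mod_sum (graded_subgroup n) subQ (fD n)).
by move=> p /andP [/Hs + /eqP <-].
Qed.

End GradedRing.

Section DGA.
Variables (A : pzRingType) (H : int -> A -> Prop) (d : A -> A).
Hypothesis dgaH : is_dga H d.

Lemma dga_graded : is_graded H. Proof. by case: dgaH. Qed.

Lemma dga_zmod_morphism : zmod_morphism d.
Proof. by case: dgaH => _ dD _ _ _; apply: addf_zmod_morphism. Qed.

HB.instance Definition _ := GRing.isZmodMorphism.Build A A d dga_zmod_morphism.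

Lemma dga_hom n a : H n a -> H (n + 1) (d a).
Proof. by case: dgaH => _ _ + _ _; apply. Qed.

Lemma dga_dd a : d (d a) = 0.
Proof. by case: dgaH. Qed.

Lemma dgaM n a b : H n a -> d (a * b) = d a * b + sgn A n * a * d b.
Proof. by case: dgaH => _ _ _ _; apply. Qed.

Lemma dga1 : d 1 = 0.
Proof.
have := dgaM 1 (graded1 dga_graded); rewrite /sgn expr0 !mulr1 !mul1r => d1.
by apply: (addrI (d 1)); rewrite addr0 -d1.
Qed.

Lemma dga_contraction h c : H (-1) h -> d h = 1 -> c = d (h * c) + h * d c.
Proof. by move=> Hh dh; rewrite (dgaM _ Hh) dh mul1r sgnN1 mulN1r mulNr subrK. Qed.

Lemma dga_boundary_hom n c y : H n c -> d y = c -> exists2 x, H (n - 1) x & d x = c.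
Proof.
move=> Hc dy; have [s [Hs ys]] := graded_decomposition dga_graded y.
set t := [seq (p.1 + 1, d p.2) | p <- s].
have Ht : {in t, forall p, H p.1 p.2} by move=> _ /mapP [p /Hs Hp ->]; apply: dga_hom.
have tc : \sum_(p <- t) p.2 = c by rewrite big_map /= -raddf_sum -ys.
exists (component (n - 1) s); first exact: component_hom dga_graded _ _ Hs.
rewrite -(component_homE dga_graded Hc Ht tc) /component big_map raddf_sum.
by apply: eq_bigl => p; rewrite /= -(inj_eq (addIr 1)) subrK.
Qed.

End DGA.

Section TensorIso.
Variables (K A : pzRingType) (HK : int -> K -> Prop) (dK : K -> K)
  (HA : int -> A -> Prop) (dA : A -> A) (phi : K -> A).
Hypotheses (KdK : is_dga HK dK) (gcomK : graded_commutative HK)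
  (AdA : is_dga HA dA) (phiKA : dga_over HK dK HA dA phi).

Let gradedK := dga_graded KdK.
Let gradedA := dga_graded AdA.

HB.instance Definition _ := GRing.isZmodMorphism.Build K K dK (dga_zmod_morphism KdK).
HB.instance Definition _ := GRing.isZmodMorphism.Build A A dA (dga_zmod_morphism AdA).

Lemma phi_is_zmod_morphism : zmod_morphism phi.
Proof. by case: phiKA => phiD _ _ _ _; apply: addf_zmod_morphism. Qed.

Lemma phi_is_monoid_morphism : monoid_morphism phi.
Proof. by case: phiKA. Qed.

HB.instance Definition _ := GRing.isZmodMorphism.Build K A phi phi_is_zmod_morphism.
HB.instance Definition _ := GRing.isMonoidMorphism.Build K A phi phi_is_monoid_morphism.

Lemma phi_hom n x : HK n x -> HA n (phi x).
Proof. by case: phiKA => _ _ _ [+ _] _; apply. Qed.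

Lemma phi_d x : dA (phi x) = phi (dK x).
Proof. by case: phiKA. Qed.

Lemma phiC q x p b : HK q x -> HA p b -> phi x * b = sgn A (q * p) * (b * phi x).
Proof.
move=> Hx; case: phiKA => _ _ _ [_ centre] _.
exact: (graded_centre_hom gradedA (phi_hom Hx) (centre x)).2.
Qed.

Local Notation tens p a q x := (fgen (Gen p a q x)).
Local Notation rel := (tensor_rel HK dK HA dA phi).
Local Notation "s ≡ t" := (eqmod rel s t) (at level 70).
Local Notation wf := (wf_FT HK HA dA).

Lemma rel_subgroup : is_subgroup rel.
Proof. by split; [apply: trel_zero | apply: trel_sub]. Qed.

Definition cycles p (a : A) := HA p a /\ dA a = 0.

Lemma cycles_subgroup p : is_subgroup (cycles p).
Proof.
have [H0 HB] := graded_subgroup gradedA p.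
split=> [|a b [Ha da] [Hb db]]; first by split; [apply: H0 | rewrite raddf0].
by split; [apply: HB | rewrite raddfB /= da db subr0].
Qed.

Lemma tens_additive_l p q x : HK q x ->
  additive_mod (cycles p) rel (fun a => tens p a q x).
Proof.
move=> Hx a b [Ha da] [Hb db]; rewrite /eqmod opprD addrA.
by apply/trel_gen/rel_addl.
Qed.

Lemma tens_additive_r p a q : cycles p a ->
  additive_mod (HK q) rel (fun x => tens p a q x).
Proof.
move=> [Ha da] x y Hx Hy; rewrite /eqmod opprD addrA.
by apply/trel_gen/rel_addr.
Qed.

Lemma tens_balance p a r z q x : cycles p a -> HK r z -> dK z = 0 -> HK q x ->
  tens (p + r) (a * phi z) q x ≡ tens p a (r + q) (z * x).
Proof. by move=> [Ha da] Hz dz Hx; apply/trel_gen/rel_bal. Qed.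

Lemma tens_sgn_l p a q x n : cycles p a -> HK q x ->
  tens p (sgn A n * a) q x ≡ tens p a q x *~ sgn int n.
Proof.
move=> Za Hx; rewrite -mulrz_sgn.
exact: (additive_modMz (cycles_subgroup p) rel_subgroup (tens_additive_l (p := p) Hx)).
Qed.

Lemma tens_sgn_r p a q x n : cycles p a -> HK q x ->
  tens p a q (sgn K n * x) ≡ tens p a q x *~ sgn int n.
Proof.
move=> Za Hx; rewrite -mulrz_sgn.
exact: (additive_modMz (graded_subgroup gradedK q) rel_subgroup
          (tens_additive_r (q := q) Za)).
Qed.

(* [alpha phi] is convertible to [fgliftz (alpha_gen phi)]. *)
HB.instance Definition _ :=
  GRing.isZmodMorphism.Build (FT A K) A (alpha phi) (fgliftz_is_zmod_morphism _).

Lemma alphaU k g : alpha phi << k *g g >> = alpha_gen phi g *~ k.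
Proof. exact: fgliftzU. Qed.

Lemma alphaZ k s : alpha phi (k *: s) = alpha phi s *~ k.
Proof. exact: fgliftzZ. Qed.

Lemma alpha_tens p a q x : alpha phi (tens p a q x) = a * phi x.
Proof. by rewrite alphaU mulr1z. Qed.

Lemma alpha_rel s : rel s -> alpha phi s = 0.
Proof.
elim=> [{}s [] * | | {}s t _ s0 _ t0]; rewrite ?raddf0 // ?raddfB /= ?s0 ?t0 ?subr0 //.
all: rewrite !alpha_tens.
- by rewrite mulrDl addrAC addrK subrr.
- by rewrite rmorphD mulrDr addrAC addrK subrr.
- by rewrite rmorphM mulrA subrr.
Qed.

Lemma wf_subgroup : is_subgroup wf.
Proof. by split=> [g|s t ws wt g /domB]; rewrite ?dom0 // mem_cat => /orP [/ws | /wt]. Qed.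

Lemma alpha_gen_hom g : wf_gen HK HA dA g ->
  HA (gdegA g + gdegK g) (alpha_gen phi g).
Proof. by case: g => [[[p a] q] x] [Ha _ Hx]; apply: (gradedM gradedA Ha (phi_hom Hx)). Qed.

Lemma wf_tens p a q x : cycles p a -> HK q x -> wf (tens p a q x).
Proof. by move=> [Ha da] Hx g; rewrite domU1 inE => /eqP ->. Qed.

Lemma cycles_d n c : HA n c -> cycles (n + 1) (dA c).
Proof. by move=> Hc; split; [apply: dga_hom AdA _ _ Hc | apply: (dga_dd AdA c)]. Qed.

Lemma exists_contraction : acyclic dK -> exists2 e, HK (-1) e & dK e = 1.
Proof.
move=> acK; have [y y1] := acK _ (dga1 KdK).
have [e] := dga_boundary_hom KdK (graded1 gradedK) (esym y1).
by rewrite sub0r; exists e.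
Qed.

Section Contraction.
Variable e : K.
Hypotheses (He : HK (-1) e) (de : dK e = 1).

(* A preimage of [c] under alpha: [c = d(E c) + E d c] for [E = phi e] by [dga_contraction],
   and [E d c = (-1)^(n+1) d c E] by graded centrality. *)
Definition beta n c : FT A K :=
  tens n (dA (phi e * c)) 0 1 + tens (n + 1) (dA c) (-1) e *~ sgn int (n + 1).

Lemma phi_e_hom : HA (-1) (phi e).
Proof. exact: phi_hom. Qed.

Lemma d_phi_e : dA (phi e) = 1.
Proof. by rewrite phi_d de rmorph1. Qed.

Lemma cycles_d_phi_e n c : HA n c -> cycles n (dA (phi e * c)).
Proof.
by move=> Hc; have := cycles_d (gradedM gradedA phi_e_hom Hc); rewrite addrAC addNr add0r.
Qed.

Lemma alpha_beta n c : HA n c -> alpha phi (beta n c) = c.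
Proof.
move=> Hc; rewrite raddfD raddfMz /= !alpha_tens rmorph1 mulr1 mulrz_sgn.
rewrite [RHS](dga_contraction AdA c phi_e_hom d_phi_e).
by rewrite (phiC He (dga_hom AdA Hc)) mulN1r sgnN.
Qed.

Lemma wf_beta n c : HA n c -> wf (beta n c).
Proof.
move=> Hc; apply: (subgroupD wf_subgroup).
  exact: (wf_tens (cycles_d_phi_e Hc) (graded1 gradedK)).
exact: (subgroupMz wf_subgroup _ (wf_tens (cycles_d Hc) He)).
Qed.

Lemma beta_additive n : additive_mod (HA n) rel (beta n).
Proof.
move=> c1 c2 H1 H2; rewrite /beta addrACA -mulrzDl.
apply: (eqmodD rel_subgroup).
  rewrite mulrDr raddfD /=.
  exact: (tens_additive_l (graded1 gradedK) (cycles_d_phi_e H1) (cycles_d_phi_e H2)).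
apply: (eqmodMz rel_subgroup); rewrite raddfD /=.
exact: (tens_additive_l He (cycles_d H1) (cycles_d H2)).
Qed.

Lemma tens_contract p a q x : cycles p a -> HK q x ->
  tens p a q x ≡ tens (p + q) (a * phi (dK (e * x))) 0 1
                 + tens (p + q + 1) (a * phi (dK x)) (-1) e *~ sgn int (q + 1).
Proof.
move=> Za Hx; have Hy := dga_hom KdK Hx.
have Hz : HK q (dK (e * x)).
  by have := dga_hom KdK (gradedM gradedK He Hx); rewrite addrAC addNr add0r.
have Hey : HK q (e * dK x).
  by have := gradedM gradedK He Hy; rewrite addrCA addNr addr0.
have Hye : HK q (dK x * e) by have := gradedM gradedK Hy He; rewrite addrK.
(* [x = d(e x) + e dx], and the cycles [d(e x)] and [dx] pass across the tensor sign. *)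
rewrite {1}(dga_contraction KdK x He de).
apply: (eqmod_trans rel_subgroup (tens_additive_r Za Hz Hey)).
apply: (eqmodD rel_subgroup).
  have := tens_balance Za Hz (dga_dd KdK _) (graded1 gradedK).
  by rewrite addr0 mulr1; apply: (eqmod_sym rel_subgroup).
rewrite (gcomK He Hy) mulN1r sgnN.
apply: (eqmod_trans rel_subgroup (tens_sgn_r _ Za Hye)).
apply: (eqmodMz rel_subgroup); have := tens_balance Za Hy (dga_dd KdK x) He.
by rewrite addrK addrA; apply: (eqmod_sym rel_subgroup).
Qed.

Lemma beta_mul_phi p a q x : cycles p a -> HK q x ->
  beta (p + q) (a * phi x) ≡ tens (p + q) (a * phi (dK (e * x))) 0 1
                 + tens (p + q + 1) (a * phi (dK x)) (-1) e *~ sgn int (q + 1).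
Proof.
move=> [Ha da] Hx.
have dA_aphi x' : dA (a * phi x') = sgn A p * (a * phi (dK x')).
  by rewrite (dgaM AdA _ Ha) da mul0r add0r phi_d mulrA.
have Zaphi : cycles (p + q + 1) (a * phi (dK x)).
  split; last by rewrite dA_aphi (dga_dd KdK) rmorph0 !mulr0.
  by rewrite -addrA; apply: gradedM Ha (phi_hom (dga_hom KdK Hx)).
have phi_e_a y : phi e * (sgn A p * (a * phi y)) = a * phi (e * y).
  rewrite mulrA -sgnC -!mulrA (mulrA (phi e)) (phiC He Ha) mulN1r sgnN.
  by rewrite !mulrA sgnK mul1r -mulrA -rmorphM.
apply: (eqmodD rel_subgroup).
  rewrite (dgaM AdA _ phi_e_hom) d_phi_e mul1r sgnN1 mulN1r mulNr dA_aphi phi_e_a.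
  have -> : dK (e * x) = x - e * dK x by rewrite {2}(dga_contraction KdK x He de) addrK.
  by rewrite rmorphB mulrBr; apply: (eqmod_refl rel_subgroup).
rewrite dA_aphi.
apply: (eqmod_trans rel_subgroup (eqmodMz rel_subgroup _ (tens_sgn_l _ Zaphi He))).
rewrite -mulrzA; have -> : sgn int p * sgn int (p + q + 1) = sgn int (q + 1).
  by rewrite -addrA (sgnD _ p) mulrA sgnK mul1r.
exact: (eqmod_refl rel_subgroup).
Qed.

Lemma tens_beta p a q x : cycles p a -> HK q x ->
  tens p a q x ≡ beta (p + q) (a * phi x).
Proof.
move=> Za Hx; apply: (eqmod_trans rel_subgroup (tens_contract Za Hx)).
exact/(eqmod_sym rel_subgroup)/beta_mul_phi.
Qed.

Lemma fgen_beta g : wf_gen HK HA dA g ->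
  fgen g ≡ beta (gdegA g + gdegK g) (alpha_gen phi g).
Proof. by case: g => [[[p a] q] x] [Ha da Hx]; apply: tens_beta. Qed.

Lemma rel_of_alpha_eq0 u : wf u -> alpha phi u = 0 -> rel u.
Proof.
move=> wu u0.
set s := [seq (gdegA g + gdegK g, alpha_gen phi g *~ coeff g u) | g <- dom u].
have Hs : {in s, forall p, HA p.1 p.2}.
  move=> _ /mapP [g /wu wg ->].
  exact: (subgroupMz (graded_subgroup gradedA _) _ (alpha_gen_hom wg)).
have s0 : \sum_(p <- s) p.2 = 0 by rewrite big_map.
have := graded_sum_eq0_mod gradedA rel_subgroup beta_additive Hs s0.
apply: (subgroup_eqmod rel_subgroup).
rewrite big_map -{1}(freeg_sumE u) big_seq [X in _ ≡ X]big_seq.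
apply: (eqmod_sum rel_subgroup) => g /wu wg /=.
rewrite -[coeff g u]intz -freegU_mulz intz.
apply: (eqmod_trans rel_subgroup (eqmodMz rel_subgroup _ (fgen_beta wg))).
apply: (eqmod_sym rel_subgroup).
exact: (additive_modMz (graded_subgroup gradedA _) rel_subgroup (@beta_additive _) _
          (alpha_gen_hom wg)).
Qed.

Lemma alpha_surj a : exists2 s, wf s & alpha phi s = a.
Proof.
have [s [Hs ->]] := graded_decomposition gradedA a.
exists (\sum_(p <- s) beta p.1 p.2).
  by rewrite big_seq; apply: (subgroup_sum wf_subgroup) => p /Hs /wf_beta.
by rewrite raddf_sum /=; apply: eq_big_seq => p /Hs /alpha_beta.
Qed.

End Contraction.

Lemma alpha_eq_rel s t : acyclic dK -> wf s -> wf t ->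
  alpha phi s = alpha phi t <-> rel (s - t).
Proof.
move=> acK ws wt; have [e He de] := exists_contraction acK.
split=> [st | /alpha_rel/eqP]; last by rewrite raddfB subr_eq0 => /eqP.
apply: (rel_of_alpha_eq0 He de (subgroupB wf_subgroup ws wt)).
by rewrite raddfB /= st subrr.
Qed.

Lemma alpha_fgen_hom g : wf_gen HK HA dA g ->
  HA (gdegA g + gdegK g) (alpha phi (fgen g)).
Proof. by move=> wg; rewrite alphaU mulr1z; apply: alpha_gen_hom. Qed.

Lemma alpha_tone : alpha phi (tone K A) = 1.
Proof. by rewrite alpha_tens rmorph1 mulr1. Qed.

Lemma alpha_gen_mul g h : wf_gen HK HA dA g -> wf_gen HK HA dA h ->
  alpha phi (gen_mul g h) = alpha_gen phi g * alpha_gen phi h.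
Proof.
case: g h => [[[p a] q] x] [[[p' b] q'] y] [_ _ Hx] [Hb _ _].
rewrite alphaU mulrz_sgn /alpha_gen /= rmorphM.
have -> : a * phi x * (b * phi y) = a * (phi x * b) * phi y by rewrite !mulrA.
by rewrite (phiC Hx Hb) !mulrA sgnC.
Qed.

Lemma alpha_gen_diff g : wf_gen HK HA dA g ->
  alpha phi (gen_diff dK g) = dA (alpha_gen phi g).
Proof.
case: g => [[[p a] q] x] [Ha da _].
by rewrite alphaU mulrz_sgn /alpha_gen /= (dgaM AdA _ Ha) da mul0r add0r phi_d mulrA.
Qed.

Lemma alpha_tmul s t : wf s -> wf t ->
  alpha phi (tmul s t) = alpha phi s * alpha phi t.
Proof.
move=> ws wt; rewrite raddf_sum [in RHS]/alpha big_distrlr /=.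
apply: eq_big_seq => g /ws wg; rewrite raddf_sum; apply: eq_big_seq => h /wt wh.
by rewrite /= alphaZ alpha_gen_mul // mulrzAl mulrzAr (mulrC (coeff g s)) mulrzA.
Qed.

Lemma alpha_tdiff s : wf s -> alpha phi (tdiff dK s) = dA (alpha phi s).
Proof.
move=> ws; rewrite raddf_sum [in RHS]/alpha raddf_sum /=.
by apply: eq_big_seq => g /ws wg; rewrite alphaZ raddfMz /= alpha_gen_diff.
Qed.

End TensorIso.

Theorem lemma4p5 (K A : pzRingType) (HK : int -> K -> Prop) (dK : K -> K)
    (HA : int -> A -> Prop) (dA : A -> A) (phi : K -> A) :
  is_dga HK dK -> graded_commutative HK -> acyclic dK ->
  is_dga HA dA -> dga_over HK dK HA dA phi ->
  alpha_dga_iso HK dK HA dA phi.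
Proof.
move=> KdK gcomK acK AdA phiKA.
have [e He de] := exists_contraction KdK acK.
split.
- move=> s t; exact: (alpha_eq_rel KdK gcomK AdA phiKA acK).
- exact: (alpha_surj KdK AdA phiKA He de).
- exact: (alpha_fgen_hom AdA phiKA).
- exact: (conj (alpha_tone phiKA) (alpha_tmul AdA phiKA)).
- exact: (alpha_tdiff AdA phiKA).
Qed.
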